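(* Let $G$ be a simple graph and let $t:=\max\{\Delta(G),M(G)\}$, where $\Delta(G)$ is the maximum degree and $M(G)$ the size of a maximum matching of $G$. If $t\geq 6$, then $\operatorname{ex}(G,P_1\cup P_2)=t$.
   Context: $P_1\cup P_2$ is the vertex-disjoint union of a single edge and a path with two edges. $\operatorname{ex}(G,H)$ is the maximum number of edges of a subgraph of $G$ containing no copy of $H$. *)

(* A simple graph is a symmetric irreflexive relation on a finType. *)
From mathcomp Require Import all_boot.
Set Implicit Arguments. Unset Strict Implicit. Unset Printing Implicit Defensive.

Section Graphs.
Variables (V : finType) (adj : rel V).

Definition edges : {set {set V}} :=
  [set [set x; y] | x in V, y in V & adj x y].

Definition deg (x : V) : nat := #|[set y | adj x y]|.

(* maximum degree Delta(G) (0 on the empty vertex set) *)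
Definition maxdeg : nat := \max_(x : V) deg x.

Definition is_matching (M : {set {set V}}) : bool :=
  (M \subset edges) &&
  [forall e1 in M, forall e2 in M, (e1 != e2) ==> [disjoint e1 & e2]].

Definition matching_number : nat :=
  \max_(M : {set {set V}} | is_matching M) #|M|.

End Graphs.

(* F (a set of edges) contains a copy of P1 u P2: five distinct vertices
   a,b,c,d,f with edges ab, cd, df (a disjoint edge and a path with two edges) *)
Definition has_P1uP2 (V : finType) (F : {set {set V}}) : bool :=
  [exists a : V, exists b : V, exists c : V, exists d : V, exists f : V,
     uniq [:: a; b; c; d; f] &&
     [&& [set a; b] \in F, [set c; d] \in F & [set d; f] \in F]].

Definition ex_P1uP2 (V : finType) (adj : rel V) : nat :=
  \max_(F : {set {set V}} | (F \subset edges adj) && ~~ has_P1uP2 F) #|F|.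

From mathcomp Require Import all_boot zify.

(* Stars and matchings contain no copy of P1 u P2, so ex(G, P1 u P2) >= t.
   Conversely, let F be a P1 u P2-free edge set and d a vertex of maximum
   degree k in F.  If k <= 1, F is a matching; if every edge of F contains d,
   F is a star.  Otherwise some edge e avoids d, and every edge avoiding d
   misses at most one F-neighbour of d: two missed neighbours u, w would give
   the copy e + udw.  Hence k <= 3.  If k = 3, every edge avoiding d is a pair
   of neighbours of d, so there are at most 3 of them; if k = 2, each of them
   is the second edge at one of the two neighbours of d, so there are at most
   2.  Either way |F| <= 6. *)

Set Implicit Arguments.
Unset Strict Implicit.
Unset Printing Implicit Defensive.

Lemma set2_inj (T : finType) (v u u' : T) : [set v; u] = [set v; u'] -> u = u'.
Proof.
move=> E; have : u \in [set v; u'] by rewrite -E !inE eqxx orbT.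
rewrite !inE => /orP[/eqP uv|/eqP //]; subst u.
have : u' \in [set v; v] by rewrite E !inE eqxx orbT.
by rewrite !inE orbb => /eqP.
Qed.

Lemma has_P1uP2P (T : finType) (F : {set {set T}}) :
  reflect (exists a b c d f, [/\ uniq [:: a; b; c; d; f],
             [set a; b] \in F, [set c; d] \in F & [set d; f] \in F])
          (has_P1uP2 F).
Proof.
apply: (iffP existsP) => [[a /existsP[b /existsP[c /existsP[d /existsP[f]]]]]|].
  by case/andP=> u /and3P[ab cd df]; exists a, b, c, d, f.
case=> a [b [c [d [f [u ab cd df]]]]]; exists a.
by apply/existsP; exists b; apply/existsP; exists c; apply/existsP; exists d;
   apply/existsP; exists f; rewrite u ab cd df.
Qed.

Lemma intersecting_P1uP2_free (T : finType) (F : {set {set T}}) :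
  {in F &, forall e1 e2 : {set T}, ~~ [disjoint e1 & e2]} -> ~~ has_P1uP2 F.
Proof.
move=> meet; apply/has_P1uP2P => -[a [b [c [d [f [u ab cd _]]]]]].
move: (meet _ _ ab cd) u; rewrite -setI_eq0 => /set0Pn[x]; rewrite !inE /= !negb_or.
by case/andP=> /orP[]/eqP-> /orP[]/eqP->; rewrite eqxx ?andbF.
Qed.

Lemma matching_P1uP2_free (T : finType) (adj : rel T) (M : {set {set T}}) :
  is_matching adj M -> ~~ has_P1uP2 M.
Proof.
case/andP=> _ /forall_inP disjM; apply/has_P1uP2P => -[a [b [c [d [f [u _ cd df]]]]]].
have cd_neq_df : [set c; d] != [set d; f].
  apply/eqP => E; have : c \in [set d; f] by rewrite -E !inE eqxx.
  by move: u; rewrite !inE /= => + /orP[]/eqP c_eq; rewrite c_eq !inE eqxx ?orbT ?andbF.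
move: (disjM _ cd) => /forall_inP/(_ _ df)/implyP/(_ cd_neq_df)/disjointFr.
by move=> /(_ d); rewrite !inE eqxx orbT => /(_ isT).
Qed.

Section SimpleGraph.
Variables (V : finType) (adj : rel V).
Hypotheses (adj_sym : symmetric adj) (adj_irr : irreflexive adj).

Lemma edges_pair x y : adj x y -> [set x; y] \in edges adj.
Proof. by move=> xy; apply/imset2P; exists x y; rewrite ?inE ?xy. Qed.

Lemma edges_incident e v : e \in edges adj -> v \in e ->
  exists2 u, adj v u & e = [set v; u].
Proof.
case/imset2P=> x y _; rewrite inE => /andP[_ xy] -> /set2P[]->; first by exists y.
by exists x; rewrite 1?adj_sym // setUC.
Qed.

Lemma edges_adj x y : [set x; y] \in edges adj -> adj x y.
Proof. by move=> /edges_incident/(_ (set21 x y))[u xu /set2_inj->]. Qed.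

Lemma card_edge e : e \in edges adj -> #|e| = 2.
Proof.
case/imset2P=> x y _; rewrite inE => /andP[_ xy] ->.
by rewrite cards2; case: eqP xy => // ->; rewrite adj_irr.
Qed.

Lemma deg_le_ex_P1uP2 x : deg adj x <= ex_P1uP2 adj.
Proof.
set S := (fun y => [set x; y]) @: [set y | adj x y].
have -> : deg adj x = #|S| by rewrite card_in_imset // => y y' _ _; apply: set2_inj.
apply: (leq_bigmax_cond (F := fun F : {set {set V}} => #|F|)); apply/andP; split.
  by apply/subsetP => e /imsetP[y]; rewrite inE => xy ->; apply: edges_pair.
apply: intersecting_P1uP2_free => _ _ /imsetP[y _ ->] /imsetP[z _ ->].
by apply/negP => /disjointFr/(_ (set21 x y)); rewrite set21.
Qed.

Lemma matching_le_ex_P1uP2 M : is_matching adj M -> #|M| <= ex_P1uP2 adj.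
Proof.
move=> matchM; apply: (leq_bigmax_cond (F := fun F : {set {set V}} => #|F|)).
by case/andP: (matchM) => -> _; rewrite (matching_P1uP2_free matchM).
Qed.

Section EdgeSet.
Variable F : {set {set V}}.
Hypothesis F_edges : F \subset edges adj.

Definition nbhd (v : V) := [set u | [set v; u] \in F].
Definition incident (v : V) := F :&: [set e : {set V} | v \in e].
Definition avoiding (v : V) := F :\: [set e : {set V} | v \in e].

Lemma nbhd_adj v u : u \in nbhd v -> adj v u.
Proof. by rewrite inE => /(subsetP F_edges)/edges_adj. Qed.

Lemma nbhd_neq v u : u \in nbhd v -> u != v.
Proof. by move=> /nbhd_adj; apply: contraTneq => ->; rewrite adj_irr. Qed.

Lemma incident_nbhd v : incident v = (fun u => [set v; u]) @: nbhd v.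
Proof.
apply/setP => e; rewrite !inE; apply/andP/imsetP => [[eF ve]|[u uN ->]].
  have [u _ e_vu] := edges_incident (subsetP F_edges _ eF) ve.
  by exists u; rewrite // inE -e_vu.
by move: uN; rewrite inE set21 => ->.
Qed.

Lemma card_incident_avoiding v : #|incident v| + #|avoiding v| = #|F|.
Proof. exact: cardsID. Qed.

Lemma card_incident v : #|incident v| = #|nbhd v|.
Proof. by rewrite incident_nbhd card_in_imset // => u u' _ _; apply: set2_inj. Qed.

Lemma card_avoiding_incident d u :
  u \in nbhd d -> #|avoiding d :&: incident u| < #|nbhd u|.
Proof.
move=> uN; rewrite -card_incident; apply: proper_card; apply/properP; split.
  by apply/subsetP => e; rewrite !inE => /and3P[/andP[_ ->] _ ->].
exists [set d; u]; last by rewrite !inE eqxx.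
by move: uN; rewrite !inE eqxx orbT => ->.
Qed.

Lemma matching_of_card_nbhd_le1 : (forall v, #|nbhd v| <= 1) -> is_matching adj F.
Proof.
move=> le1; rewrite /is_matching F_edges; apply/forall_inP => e1 e1F.
apply/forall_inP => e2 e2F; apply/implyP => e12; rewrite -setI_eq0.
apply: contraNT e12 => /set0Pn[v]; rewrite inE => /andP[ve1 ve2].
move: (le1 v); rewrite -card_incident => /card_le1_eqP/(_ e1 e2)->//.
all: by rewrite !inE ?e1F ?e2F.
Qed.

Lemma card_star d : (forall e, e \in F -> d \in e) -> #|F| <= deg adj d.
Proof.
move=> through_d; have <- : incident d = F.
  by apply/setIidPl/subsetP => e /through_d; rewrite inE.
by rewrite card_incident; apply/subset_leq_card/subsetP => u /nbhd_adj; rewrite inE.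
Qed.

Hypothesis F_free : ~~ has_P1uP2 F.

Lemma card_nbhdD_edge_le1 d e : e \in F -> d \notin e -> #|nbhd d :\: e| <= 1.
Proof.
move=> eF de; apply/card_le1_eqP => u w.
rewrite !in_setD => /andP[ue uN] /andP[we wN].
apply: contraNeq F_free => uw; apply/has_P1uP2P.
case/imset2P: (subsetP F_edges _ eF) => x y _; rewrite inE => /andP[_ xy] e_xy.
subst e.
have xNy : x != y by apply: contraTneq xy => ->; rewrite adj_irr.
have [uNd wNd] := (nbhd_neq uN, nbhd_neq wN).
move: uN wN ue we de; rewrite !inE !negb_or.
move=> du dw /andP[ux uy] /andP[wx wy] /andP[dx dy].
exists x, y, u, d, w; split=> //; last by rewrite setUC.
rewrite /= !inE !negb_or xNy !(eq_sym x) !(eq_sym y) ux uy wx wy dx dy.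
by rewrite uNd eq_sym uw eq_sym wNd.
Qed.

Lemma card_nbhd_le3 d e : e \in F -> d \notin e -> #|nbhd d| <= 3.
Proof.
move=> eF de; rewrite -(cardsID e (nbhd d)).
have : #|nbhd d :&: e| <= #|e| by apply/subset_leq_card/subsetIr.
have := card_nbhdD_edge_le1 eF de; rewrite (card_edge (subsetP F_edges _ eF)); lia.
Qed.

Lemma avoiding_sub_nbhd3 d e : #|nbhd d| = 3 -> e \in F -> d \notin e -> e \subset nbhd d.
Proof.
move=> N3 eF de; have /eqP <- : nbhd d :&: e == e; last exact: subsetIl.
rewrite eqEcard subsetIr (card_edge (subsetP F_edges _ eF)).
have := cardsID e (nbhd d); have := card_nbhdD_edge_le1 eF de; lia.
Qed.

Lemma card_avoiding_nbhd3 d : #|nbhd d| = 3 -> #|avoiding d| <= 3.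
Proof.
move=> N3; rewrite -[3]/'C(3, 2) -[in 'C(_, _)]N3 -cards_draws.
apply/subset_leq_card/subsetP => e; rewrite !inE => /andP[de eF].
by rewrite avoiding_sub_nbhd3 // (card_edge (subsetP F_edges _ eF)).
Qed.

Lemma card_avoiding_nbhd2 d :
  (forall v, #|nbhd v| <= 2) -> #|nbhd d| = 2 -> #|avoiding d| <= 2.
Proof.
move=> le2 /eqP/cards2P[a [b [aNb Nd]]].
have [aN bN] : a \in nbhd d /\ b \in nbhd d by rewrite Nd !inE !eqxx orbT.
apply: (@leq_trans #|(avoiding d :&: incident a) :|: (avoiding d :&: incident b)|).
  apply/subset_leq_card/subsetP => e eA; rewrite -setIUr inE eA /=.
  move: eA; rewrite !inE => /andP[de eF]; rewrite eF /=.
  apply: contraLR (card_nbhdD_edge_le1 eF de); rewrite negb_or -ltnNge => /andP[ae be].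
  by rewrite (cardsD1 a) (cardsD1 b (_ :\ a)) !in_setD1 !in_setD ae be aN bN eq_sym aNb.
apply: leq_trans (leq_card_setU _ _) _.
have := card_avoiding_incident aN; have := card_avoiding_incident bN.
have := le2 a; have := le2 b; lia.
Qed.

Lemma card_nonstar_le6 d e : (forall v, #|nbhd v| <= #|nbhd d|) -> 1 < #|nbhd d| ->
  e \in F -> d \notin e -> #|F| <= 6.
Proof.
move=> dmax k_gt1 eF de; have le3 := card_nbhd_le3 eF de.
rewrite -(card_incident_avoiding d) card_incident.
have [N3|N2] : #|nbhd d| = 3 \/ #|nbhd d| = 2 by lia.
  by have := card_avoiding_nbhd3 N3; lia.
have le2 v : #|nbhd v| <= 2 by rewrite -N2.
by have := card_avoiding_nbhd2 le2 N2; lia.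
Qed.

Lemma card_P1uP2_free_le : #|F| <= maxn 6 (maxn (maxdeg adj) (matching_number adj)).
Proof.
have [->|[e0 e0F]] := set_0Vmem F; first by rewrite cards0.
case/imset2P: (subsetP F_edges _ e0F) => v0 _ _ _ _.
have [d _ dmax] := @arg_maxnP V v0 predT (fun v => #|nbhd v|) isT.
rewrite !leq_max; have [le1|k_gt1] := leqP #|nbhd d| 1.
  have matchF : is_matching adj F.
    by apply: matching_of_card_nbhd_le1 => v; apply: leq_trans (dmax v isT) le1.
  by rewrite (leq_bigmax_cond (F := fun M : {set {set V}} => #|M|) _ matchF) !orbT.
have [star|] := boolP [forall e in F, d \in e].
  by rewrite (leq_trans (card_star (forall_inP star)) (leq_bigmax (F := deg adj) d)) orbT.
case/forall_inPn => e eF de.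
by rewrite (card_nonstar_le6 (fun v => dmax v isT) k_gt1 eF de).
Qed.

End EdgeSet.

End SimpleGraph.

Theorem corollary3p18 (V : finType) (adj : rel V) :
  symmetric adj -> irreflexive adj ->
  6 <= maxn (maxdeg adj) (matching_number adj) ->
  ex_P1uP2 adj = maxn (maxdeg adj) (matching_number adj).
Proof.
move=> adj_sym adj_irr t_ge6; apply/eqP; rewrite eqn_leq geq_max; apply/and3P; split.
- apply/bigmax_leqP => F /andP[F_edges F_free].
  by rewrite -(maxn_idPr t_ge6) (card_P1uP2_free_le adj_sym adj_irr F_edges F_free).
- by apply/bigmax_leqP => x _; apply: deg_le_ex_P1uP2.
- by apply/bigmax_leqP => M; apply: matching_le_ex_P1uP2.
Qed.
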